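(* Let $(\mathcal Q,d)$ be a Hadamard space, $Y$ a $\mathcal Q$-valued random variable, $o\in\mathcal Q$, and $m\in\arg\min_{q\in\mathcal Q}\mathbb E[d(Y,q)-d(Y,o)]$. Let $\gamma:I\to\mathcal Q$ be a unit-speed geodesic on a closed interval $I$ with $0\in I$, $\gamma(0)=m$, and $\mathbb P(Y\in\gamma(I))=1$. Let $q\in\mathcal Q$. Then the projection $p:=\arg\min_{z\in\gamma(I)}d(q,z)$ exists and is unique; assume (after possibly reversing the orientation of $\gamma$) that $\gamma^{-1}(p)\ge0$. Define $a_-:=\mathbb P(\gamma^{-1}(Y)<0)$, $a_0:=\mathbb P(Y=m)$, $a_+:=\mathbb P(\gamma^{-1}(Y)>0)$. Then $$\mathbb E[d(Y,q)-d(Y,m)]\ \ge\ d(q,m)\,a_0+d(p,m)\,(a_--a_+)+\mathbb E\Big[\big(d(q,p)+d(p,m)-d(Y,m)\big)\mathbf 1_{(0,\,d(q,p)+d(p,m)]}\big(\gamma^{-1}(Y)\big)\Big].$$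
   Context: A Hadamard space is a complete metric space $(\mathcal Q,d)$ such that for all $y_0,y_1$ there is $m$ with $\frac12 d(y_0,q)^2+\frac12 d(y_1,q)^2-\frac14 d(y_0,y_1)^2\ge d(q,m)^2$ for all $q$. A unit-speed geodesic is a map $\gamma:I\to\mathcal Q$ on an interval with $d(\gamma(s),\gamma(t))=|s-t|$; it is injective, so $\gamma^{-1}$ is defined on its image. *)

From HB Require Import structures.
From mathcomp Require Import all_boot all_order all_algebra.
From mathcomp Require Import all_classical all_reals all_analysis.
Set Implicit Arguments. Unset Strict Implicit. Unset Printing Implicit Defensive.
Import Order.TTheory GRing.Theory Num.Theory.
Local Open Scope classical_set_scope.
Local Open Scope ring_scope.

Definition is_metric {R : realType} {Q : Type} (d : Q -> Q -> R) : Prop :=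
  [/\ forall x y, d x y = 0 <-> x = y,
      forall x y, d x y = d y x &
      forall x y z, d x z <= d x y + d y z].

Definition metric_complete {R : realType} {Q : Type} (d : Q -> Q -> R) : Prop :=
  forall u : nat -> Q,
    (forall e : R, 0 < e -> exists N : nat, forall n k : nat,
        (N <= n)%N -> (N <= k)%N -> d (u n) (u k) < e) ->
    exists x : Q, forall e : R, 0 < e -> exists N : nat, forall n : nat,
        (N <= n)%N -> d (u n) x < e.

(* Hadamard space: complete metric space with the midpoint (CAT(0)) inequality. *)
Definition hadamard {R : realType} {Q : Type} (d : Q -> Q -> R) : Prop :=
  [/\ is_metric d, metric_complete d &
      forall y0 y1 : Q, exists m : Q, forall q : Q,
        2^-1 * d y0 q ^+ 2 + 2^-1 * d y1 q ^+ 2 - 4^-1 * d y0 y1 ^+ 2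
          >= d q m ^+ 2].

Definition metric_open {R : realType} {Q : Type} (d : Q -> Q -> R) (U : set Q) : Prop :=
  forall x, U x -> exists e : R, 0 < e /\ forall y, d x y < e -> U y.

Definition metric_borel {R : realType} {Q : Type} (d : Q -> Q -> R) : set (set Q) :=
  <<s [set U | metric_open d U] >>.

Definition borel_measurable_map {R : realType} {dO : measure_display}
  {Omega : measurableType dO} {Q : Type} (d : Q -> Q -> R) (Y : Omega -> Q) : Prop :=
  forall B, metric_borel d B -> measurable (Y @^-1` B).

Definition unit_speed_geodesic {R : realType} {Q : Type} (d : Q -> Q -> R)
  (I : set R) (g : R -> Q) : Prop :=
  forall s t, I s -> I t -> d (g s) (g t) = `|s - t|.

(* The set of points y = g t with t in I and A t, i.e. {y in g(I) | g^{-1}(y) in A}. *)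
Definition geod_inv_in {R : realType} {Q : Type} (I : set R) (g : R -> Q)
  (A : set R) : set Q := g @` (I `&` A).

Definition is_projection {R : realType} {Q : Type} (d : Q -> Q -> R)
  (I : set R) (g : R -> Q) (q p : Q) : Prop :=
  (g @` I) p /\ forall z, (g @` I) z -> d q p <= d q z.

(* In a Hadamard space, t |-> d(q, g t)^2 satisfies the midpoint inequality
   f((s+t)/2) <= (f s + f t)/2 - (s-t)^2/4 along a unit-speed geodesic g.
   Iterating it towards a minimiser t_p (dyadic steps) yields
   d(q, g t)^2 >= d(q, p)^2 + (t - t_p)^2 with p = g t_p, which gives existence
   and uniqueness of the projection and d(q, g t) >= max (d(q,p), |t - t_p|).
   With Y = g t and m = g 0, the integrand d(Y,q) - d(Y,m) = d(q, g t) - |t| is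
   thus pointwise at least d(q,m) at t = 0, t_p for t < 0, L - t - t_p on
   0 < t <= L = d(q,p) + t_p, and -t_p for t > L; integrating this pointwise
   bound gives the theorem, without using that m minimises the expectation. *)

From HB Require Import structures.
From mathcomp Require Import all_boot all_order all_algebra.
From mathcomp Require Import all_classical all_reals all_analysis.
From mathcomp Require Import ring lra measurable_realfun.
Set Implicit Arguments. Unset Strict Implicit. Unset Printing Implicit Defensive.
Import Order.TTheory GRing.Theory Num.Theory numFieldNormedType.Exports.
Local Open Scope classical_set_scope.
Local Open Scope ring_scope.
Section real_functions.
Variable R : realType.

Lemma dyadic_gt0_le1 (n : nat) : 0 < (2 ^- n : R) <= 1.
Proof. by rewrite invr_gt0 exprn_gt0 //= invf_le1 ?exprn_gt0 // exprn_ege1 //; lra. Qed.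

Lemma ge0_dyadic_perturbation (x c : R) :
  (forall n : nat, 0 <= x + 2 ^- n * c) -> 0 <= x.
Proof.
move=> h; rewrite leNgt; apply/negP => x0.
have c1 : 0 < `|c| + 1 by have := normr_ge0 c; lra.
have nx : 0 < - x by lra.
have [N _ /(_ N (leqnn N))] := near_infty_natSinv_expn_lt (PosNum (divr_gt0 nx c1)).
rewrite /= mul1r ltr_pdivlMr //.
have /andP[e0 _] := dyadic_gt0_le1 N.
have := h N; have := ler_norm c; move: (2 ^- N : R) e0 => e; nra.
Qed.

Lemma is_interval_between {I : set R} {a b e : R} :
  is_interval I -> I a -> I b -> 0 <= e <= 1 -> I (a + e * (b - a)).
Proof.
move=> intI Ia Ib /andP[e0 e1].
have [ab|ba] := leP a b.
  by apply: (intI a b) => //; apply/andP; split; nra.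
by apply: (intI b a) => //; apply/andP; split; nra.
Qed.

Section midpoint_convex.
Variables (I : set R) (f : R -> R).
Hypothesis intI : is_interval I.
Hypothesis f_mid : forall s t, I s -> I t ->
  f ((s + t) / 2) <= 2^-1 * f s + 2^-1 * f t - 4^-1 * (s - t) ^+ 2.

Lemma midpoint_convex_dyadic a b n : I a -> I b ->
  f (a + 2 ^- n * (b - a)) <=
  (1 - 2 ^- n) * f a + 2 ^- n * (f b - (b - a) ^+ 2) + (2 ^- n) ^+ 2 * (b - a) ^+ 2.
Proof.
move=> Ia Ib; elim: n => [|n IH].
  rewrite expr0 invr1 expr1n !mul1r subrr mul0r add0r addrC subrK; lra.
have -> : 2 ^- n.+1 = 2 ^- n / 2 :> R by rewrite exprSr invfM.
have /andP[/ltW e0 e1] := dyadic_gt0_le1 n.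
have e01 : 0 <= (2 ^- n : R) <= 1 by rewrite e0 e1.
have -> : a + 2 ^- n / 2 * (b - a) = (a + (a + 2 ^- n * (b - a))) / 2 by field.
apply: (le_trans (f_mid Ia (is_interval_between intI Ia Ib e01))).
move: IH; move: (2 ^- n) (f a) (f b) (f (a + _ * (b - a))) => e fa fb fx; nra.
Qed.

Lemma midpoint_convex_min_growth a b : I a -> I b ->
  (forall t, I t -> f a <= f t) -> f a + (b - a) ^+ 2 <= f b.
Proof.
move=> Ia Ib amin; rewrite -subr_ge0.
apply: (@ge0_dyadic_perturbation _ ((b - a) ^+ 2)) => n.
have /andP[e0 e1] := dyadic_gt0_le1 n.
have e01 : 0 <= (2 ^- n : R) <= 1 by rewrite (ltW e0) e1.
have := amin _ (is_interval_between intI Ia Ib e01).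
have := midpoint_convex_dyadic n Ia Ib.
move: (2 ^- n) e0 => e e0 fx_le fa_le; rewrite -(pmulr_rge0 _ e0); nra.
Qed.

End midpoint_convex.

Lemma lipschitz_within (C : set R) (phi : R -> R) :
  (forall s t, C s -> C t -> `|phi s - phi t| <= `|s - t|) ->
  {within C, continuous phi}.
Proof.
move=> phiL; apply/subspace_continuousP => x Cx.
apply/cvgrPdist_lt => eps eps0; apply/nbhs_ballP; exists eps => //= s.
by rewrite /ball /= => xs Cs; apply: le_lt_trans (phiL _ _ Cx Cs) xs.
Qed.

Lemma lipschitz_coercive_min (C : set R) (phi : R -> R) t0 :
  closed C -> C t0 ->
  (forall s t, C s -> C t -> `|phi s - phi t| <= `|s - t|) ->
  (forall s, C s -> `|s - t0| - phi t0 <= phi s) ->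
  exists2 c, C c & forall s, C s -> phi c <= phi s.
Proof.
move=> cC Ct0 phiL phi_coer.
pose r := 2 * `|phi t0| + 1.
have r0 : 0 <= r by rewrite /r; have := normr_ge0 (phi t0); lra.
pose K := `[t0 - r, t0 + r] `&` C.
have cK : compact K by apply: compact_closedI => //; exact: segment_compact.
have Kt0 : K t0 by split => //=; rewrite in_itv /=; apply/andP; split; lra.
have [c /set_mem [_ Cc] cmin] := compact_EVT_min (ex_intro _ t0 Kt0) cK
  (continuous_subspaceW (@subIsetr _ _ _) (lipschitz_within phiL)).
exists c => // s Cs; have [sK|sK] := leP `|s - t0| r.
  apply: cmin; apply/mem_set; split => //=; rewrite in_itv /=.
  by move: sK; rewrite ler_norml => /andP[? ?]; apply/andP; split; lra.
have := phi_coer _ Cs; have := cmin t0 (mem_set Kt0).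
have := ler_norm (phi t0); rewrite /r in sK; lra.
Qed.

End real_functions.

Lemma in_set_bool (T : Type) (b : pred T) x : (x \in [set y | b y]) = b x.
Proof. by apply/idP/idP => [/set_mem|/mem_set]. Qed.

Lemma indic_preimage {T U : Type} {R : realType} (f : T -> U) (B : set U) x :
  \1_(f @^-1` B) x = \1_B (f x) :> R.
Proof. by []. Qed.

Lemma normr_indic_le1 (T : Type) (R : realType) (A : set T) x : `|\1_A x : R| <= 1.
Proof. by rewrite indicE; case: (x \in A); rewrite ?normr1 ?normr0. Qed.

Lemma geodesic_lower_bound_pointwise (R : realType) (t tp Dq Dp Dm : R) :
  0 <= tp -> Dp <= Dq -> `|t - tp| <= Dq -> (t = 0 -> Dq = Dm) ->
  Dm * \1_[set 0] t + (tp * \1_[set s | s < 0] t + (- tp * \1_[set s | 0 < s] t +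
  (Dp + tp - `|t|) * \1_`]0, Dp + tp] t)) <= Dq - `|t|.
Proof.
move=> tp0 Dp_le tp_le Dm_eq; rewrite !indicE in_set1 !in_set_bool in_itv /=.
move: tp_le; rewrite ler_norml => /andP[tp_ge tp_le].
have [t0|t0|t0] := ltgtP t 0; rewrite /= ?mulr0 ?mulr1 ?add0r ?addr0.
- rewrite (ltr0_norm t0); lra.
- rewrite (gtr0_norm t0); have [tL|tL] := leP t (Dp + tp); rewrite /= ?mulr0 ?mulr1 ?addr0; lra.
- by rewrite t0 normr0 subr0 (Dm_eq t0).
Qed.

Section metric.
Variables (R : realType) (Q : Type) (d : Q -> Q -> R).
Hypothesis dm : is_metric d.

Lemma metric_eq0 x y : d x y = 0 <-> x = y.
Proof. by case: dm. Qed.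

Lemma metric_refl x : d x x = 0.
Proof. exact/metric_eq0. Qed.

Lemma metric_sym x y : d x y = d y x.
Proof. by case: dm. Qed.

Lemma metric_triangle x y z : d x z <= d x y + d y z.
Proof. by case: dm. Qed.

Lemma metric_ge0 x y : 0 <= d x y.
Proof.
by have := metric_triangle x y x; rewrite metric_refl (metric_sym y x); lra.
Qed.

Lemma metric_gt0 x y : x <> y -> 0 < d x y.
Proof. by move=> xy; rewrite lt_neqAle metric_ge0 andbT eq_sym; apply/eqP/metric_eq0. Qed.

Lemma metric_lipschitz x y z : `|d z x - d z y| <= d x y.
Proof.
have := metric_triangle z x y; have := metric_triangle z y x.
by rewrite ler_norml (metric_sym y x) => ? ?; apply/andP; split; lra.
Qed.

Lemma metric_open_gt z (r : R) : metric_open d [set y | r < d y z].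
Proof.
move=> y /= ry; exists (d y z - r); split => [|y' yy']; first lra.
by have := metric_triangle y y' z; have := metric_triangle y' y z; rewrite (metric_sym y' y); lra.
Qed.

Lemma metric_open_setC1 z : metric_open d (~` [set z]).
Proof.
move=> x xz; exists (d x z); split => [|y xy /= yz]; first exact: metric_gt0.
by move: xy; rewrite yz; lra.
Qed.

Section geodesic.
Variables (I : set R) (g : R -> Q).
Hypothesis gI : unit_speed_geodesic d I g.

Lemma geodesic_inj s t : I s -> I t -> g s = g t -> s = t.
Proof.
move=> Is It gst; have := gI Is It; rewrite gst metric_refl => /esym/eqP.
by rewrite normr_eq0 subr_eq0 => /eqP.
Qed.

Lemma geod_inv_in_image A t : I t -> geod_inv_in I g A (g t) <-> A t.
Proof.
move=> It; split=> [[s [Is As] gst]|At]; last by exists t.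
by rewrite -(geodesic_inj Is It gst).
Qed.

Lemma geod_inv_in_set1 : I 0 -> geod_inv_in I g [set 0] = [set g 0].
Proof.
move=> I0; apply/seteqP; split=> [_ [t [It /= ->] <-] //|_ ->].
by exists 0.
Qed.

Lemma indic_geod_inv_in A t : I t -> \1_(geod_inv_in I g A) (g t) = \1_A t :> R.
Proof.
move=> It; rewrite !indicE (_ : (g t \in _) = (t \in A)) //.
by apply/idP/idP => /set_mem/(geod_inv_in_image _ It)/mem_set.
Qed.

Lemma geod_inv_inD1 A : I 0 -> geod_inv_in I g (A `\ 0) = geod_inv_in I g A `\ g 0.
Proof.
move=> I0; apply/seteqP; split=> [_ [t [It [At t0]] <-]|_ [[t [It At] <-] /= gt0]].
  by split; [exists t | move/(geodesic_inj It I0)].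
by exists t => //; split => //; split => // t0; apply: gt0; rewrite t0.
Qed.

Lemma geodesic_dist_min (C : set R) x t0 : C `<=` I -> closed C -> C t0 ->
  exists2 c, C c & forall s, C s -> d x (g c) <= d x (g s).
Proof.
move=> CI cC Ct0; apply: (lipschitz_coercive_min cC Ct0) => [s t Cs Ct|s Cs].
  by rewrite -(gI (CI _ Cs) (CI _ Ct)); exact: metric_lipschitz.
have := gI (CI _ Cs) (CI _ Ct0); have := metric_triangle (g s) x (g t0).
by rewrite (metric_sym (g s) x); lra.
Qed.

Lemma metric_open_geodesic_imageC (C : set R) :
  C `<=` I -> closed C -> metric_open d (~` (g @` C)).
Proof.
move=> CI cC x xC.
have [[t0 Ct0]|C0] := pselect (exists t, C t); last first.
  by exists 1; split => // y _ [t Ct _]; apply: C0; exists t.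
have [c Cc cmin] := geodesic_dist_min x CI cC Ct0.
exists (d x (g c)); split => [|y xy [s Cs gs]].
  by apply: metric_gt0 => xc; apply: xC; exists c.
by move: xy; rewrite -gs; have := cmin _ Cs; lra.
Qed.

End geodesic.
End metric.

Section hadamard_projection.
Variables (R : realType) (Q : Type) (d : Q -> Q -> R) (I : set R) (g : R -> Q).
Hypotheses (dH : hadamard d) (intI : is_interval I) (gI : unit_speed_geodesic d I g).

Let dm : is_metric d. Proof. by case: dH. Qed.

Lemma geodesic_midpoint_ineq z s t : I s -> I t ->
  d z (g ((s + t) / 2)) ^+ 2 <=
  2^-1 * d z (g s) ^+ 2 + 2^-1 * d z (g t) ^+ 2 - 4^-1 * (s - t) ^+ 2.
Proof.
move=> Is It; have Imid : I ((s + t) / 2).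
  rewrite (_ : _ / 2 = s + 2^-1 * (t - s)); last by field.
  by apply: is_interval_between; rewrite // ?invr_ge0 ?invf_le1; lra.
have [_ _ /(_ (g s) (g t)) [c cmid]] := dH.
(* The Hadamard midpoint c is g ((s + t) / 2): evaluated there, the left-hand
   side of its defining inequality vanishes. *)
have -> : g ((s + t) / 2) = c.
  apply/(metric_eq0 dm)/eqP; rewrite -sqrf_eq0 eq_le sqr_ge0 andbT.
  apply: le_trans (cmid _) _; rewrite gI // gI // gI // !real_normK ?num_real //.
  by rewrite le_eqVlt; apply/orP; left; apply/eqP; field.
by have := cmid z; rewrite !(metric_sym dm z) gI // real_normK ?num_real.
Qed.

Lemma geodesic_projection_pythagoras q a b : I a -> I b ->
  (forall t, I t -> d q (g a) <= d q (g t)) ->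
  d q (g a) ^+ 2 + (b - a) ^+ 2 <= d q (g b) ^+ 2.
Proof.
move=> Ia Ib amin.
apply: (@midpoint_convex_min_growth _ I (fun t => d q (g t) ^+ 2)) => // [s t Is It|t It].
  exact: geodesic_midpoint_ineq.
by rewrite ler_pXn2r ?nnegrE ?(metric_ge0 dm) // amin.
Qed.

Lemma geodesic_projection_dist_ge q a b : I a -> I b ->
  (forall t, I t -> d q (g a) <= d q (g t)) -> `|b - a| <= d q (g b).
Proof.
move=> Ia Ib amin.
rewrite -(ler_pXn2r (n := 2)) ?nnegrE ?(metric_ge0 dm) // real_normK ?num_real //.
by have := geodesic_projection_pythagoras Ia Ib amin; have := sqr_ge0 (d q (g a)); lra.
Qed.

Lemma geodesic_projection_exists_unique q : closed I -> I 0 ->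
  exists! p, is_projection d I g q p.
Proof.
move=> cI I0; have [a Ia amin] := geodesic_dist_min dm gI q (@subset_refl _ I) cI I0.
exists (g a); split=> [|_ [[b Ib <-] bmin]].
  by split=> [|_ [t It <-]]; [exists a | exact: amin].
have := geodesic_projection_pythagoras Ia Ib amin.
have := bmin (g a) (ex_intro2 _ _ a Ia erefl).
rewrite -(ler_pXn2r (n := 2)) ?nnegrE ?(metric_ge0 dm) // => ba ab.
have : (b - a) ^+ 2 <= 0 by lra.
by rewrite le_eqVlt ltNge sqr_ge0 orbF sqrf_eq0 subr_eq0 => /eqP ->.
Qed.

End hadamard_projection.

Lemma metric_borel_closed (R : realType) (Q : Type) (d : Q -> Q -> R) (B : set Q) :
  metric_open d (~` B) -> metric_borel d B.
Proof.
by move=> oBC; rewrite -(setCK B) -setTD; apply: sigma_algebraCD; exact: sub_sigma_algebra.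
Qed.

Section expectation.
Variables (dT : measure_display) (T : measurableType dT) (R : realType).
Variable P : probability T R.

Lemma bounded_integrable (f : T -> R) (M : R) :
  measurable_fun setT f -> (forall w, `|f w| <= M) -> P.-integrable setT (EFin \o f).
Proof.
move=> mf fM; apply: measurable_bounded_integrable => //.
  by rewrite ltey_eq fin_num_measure.
exists M; split; first exact: num_real.
by move=> M' MM' w _; exact: le_trans (fM w) (ltW MM').
Qed.

Lemma integrable_scale_indicD (c : R) (A : set T) (f : T -> R) :
  measurable A -> P.-integrable setT (EFin \o f) ->
  P.-integrable setT (EFin \o (fun w => c * \1_A w + f w)).
Proof.
move=> mA fi.
rewrite (_ : _ \o _ = (EFin \o (fun w => (c * \1_A w)%R)) \+ (EFin \o f))%E //.
apply: integrableD => //; apply: (@bounded_integrable _ `|c|).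
  by apply: measurable_funM => //; exact: measurable_indic.
by move=> w; rewrite normrM -[leRHS]mulr1 ler_wpM2l // normr_indic_le1.
Qed.

Lemma integral_scale_indicD (c : R) (A : set T) (f : T -> R) :
  measurable A -> P.-integrable setT (EFin \o f) ->
  (\int[P]_w (c * \1_A w + f w)%:E = (c * fine (P A))%:E + \int[P]_w (f w)%:E)%E.
Proof.
move=> mA fi; under eq_integral do rewrite EFinD EFinM.
rewrite integralD //; last by apply: integrableZl => //; exact: integrable_indic.
rewrite integralZl //; last exact: integrable_indic.
by rewrite integral_indic // setIT EFinM fineK // fin_num_measure.
Qed.

Lemma le_integral_almost_surely (E : set T) (f h : T -> R) :
  measurable E -> P E = 1%E ->
  P.-integrable setT (EFin \o f) -> P.-integrable setT (EFin \o h) ->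
  (forall w, E w -> f w <= h w) ->
  (\int[P]_w (f w)%:E <= \int[P]_w (h w)%:E)%E.
Proof.
move=> mE PE fi hi fh.
have mEC : measurable (~` E) by exact: measurableC.
have PEC : P (~` E) = 0%E by rewrite probability_setC // PE subee.
rewrite (negligible_integral mEC) // [leRHS](negligible_integral mEC) // setTD setCK.
apply: le_integral => //; [exact: integrableS fi | exact: integrableS hi |].
by move=> w /set_mem Ew; rewrite lee_fin fh.
Qed.

End expectation.

Section geodesic_support.
Variables (R : realType) (Q : Type) (d : Q -> Q -> R).
Hypothesis dm : is_metric d.
Variables (dO : measure_display) (Omega : measurableType dO) (P : probability Omega R).
Variable Y : Omega -> Q.
Hypothesis Ymeas : borel_measurable_map d Y.
Variables (I : set R) (g : R -> Q).
Hypotheses (cI : closed I) (I0 : I 0) (gI : unit_speed_geodesic d I g).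

Lemma measurable_dist z : measurable_fun setT (fun w => d (Y w) z).
Proof.
move=> _; apply: (measurability _ (RGenOInfty.measurableE R)) => //.
move=> /= _ [_ [r ->] <-]; apply: measurableI => //.
rewrite (_ : _ @^-1` _ = Y @^-1` [set y | r < d y z]).
  by apply: Ymeas; apply: sub_sigma_algebra; exact: metric_open_gt.
by apply/seteqP; split => w /=; rewrite in_itv /= andbT.
Qed.

Lemma measurable_geodesic_support : measurable (Y @^-1` (g @` I)).
Proof.
apply: Ymeas; apply: metric_borel_closed.
exact: (metric_open_geodesic_imageC dm gI (@subset_refl _ I)).
Qed.

Lemma measurable_geodesic_event (A : set R) : closed A ->
  measurable (Y @^-1` geod_inv_in I g (A `\ 0)).
Proof.
move=> cA; rewrite (geod_inv_inD1 dm gI) //; apply: measurableD; apply: Ymeas.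
  apply: metric_borel_closed; apply: (metric_open_geodesic_imageC dm gI).
    exact: subIsetl.
  exact: closedI.
by apply: metric_borel_closed; exact: metric_open_setC1.
Qed.

Lemma measurable_geodesic_origin : measurable (Y @^-1` [set g 0]).
Proof. by apply: Ymeas; apply: metric_borel_closed; exact: metric_open_setC1. Qed.

Lemma measurable_geodesic_neg : measurable (Y @^-1` geod_inv_in I g [set t | t < 0]).
Proof.
rewrite (_ : [set t | t < 0] = [set t | t <= 0] `\ 0).
  exact: measurable_geodesic_event.
apply/seteqP; split=> t /=; rewrite lt_neqAle; first by move=> /andP[/eqP ? ?].
by move=> [? /eqP ?]; apply/andP.
Qed.

Lemma measurable_geodesic_pos : measurable (Y @^-1` geod_inv_in I g [set t | 0 < t]).
Proof.
rewrite (_ : [set t | 0 < t] = [set t | 0 <= t] `\ 0).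
  exact: measurable_geodesic_event.
apply/seteqP; split=> t /=; rewrite lt_neqAle eq_sym; first by move=> /andP[/eqP ? ?].
by move=> [? /eqP ?]; apply/andP.
Qed.

Lemma measurable_geodesic_itv (L : R) : measurable (Y @^-1` geod_inv_in I g `]0, L]).
Proof.
rewrite -(@setDitv1l _ _ _ _ true); apply: measurable_geodesic_event.
exact: interval_closed.
Qed.

Lemma expectation_geodesic_lower_bound q tp : I tp -> 0 <= tp ->
  (forall t, I t -> d q (g tp) <= d q (g t)) ->
  (forall t, I t -> `|t - tp| <= d q (g t)) ->
  P (Y @^-1` (g @` I)) = 1%E ->
  (\int[P]_w ((d (Y w) q - d (Y w) (g 0))%:E) >=
   (d q (g 0) * fine (P (Y @^-1` [set g 0])) +
    tp * (fine (P (Y @^-1` geod_inv_in I g [set t | t < 0])) -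
          fine (P (Y @^-1` geod_inv_in I g [set t | 0 < t]))))%:E +
   \int[P]_w (((d q (g tp) + tp - d (Y w) (g 0)) *
                \1_(Y @^-1` geod_inv_in I g `]0, d q (g tp) + tp]) w)%:E))%E.
Proof.
move=> Itp tp0 tp_min tp_far Ysupp.
set L := d q (g tp) + tp.
set A0 := Y @^-1` [set g 0].
set Am := Y @^-1` geod_inv_in I g [set t | t < 0].
set Ap := Y @^-1` geod_inv_in I g [set t | 0 < t].
set AL := Y @^-1` geod_inv_in I g `]0, L].
have mA0 : measurable A0 := measurable_geodesic_origin.
have mAm : measurable Am := measurable_geodesic_neg.
have mAp : measurable Ap := measurable_geodesic_pos.
have mAL : measurable AL := measurable_geodesic_itv L.
have L0 : 0 <= L by rewrite /L; have := metric_ge0 dm q (g tp); lra.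
pose F w := d (Y w) q - d (Y w) (g 0).
pose h w := (L - d (Y w) (g 0)) * \1_AL w.
pose k w := d q (g 0) * \1_A0 w + (tp * \1_Am w + (- tp * \1_Ap w + h w)).
have Fi : P.-integrable setT (EFin \o F).
  apply: (bounded_integrable P (M := d q (g 0))); last by move=> w; exact: metric_lipschitz.
  by apply: measurable_funB; exact: measurable_dist.
have hi : P.-integrable setT (EFin \o h).
  apply: (bounded_integrable P (M := L)).
    apply: measurable_funM; last exact: measurable_indic.
    by apply: measurable_funB => //; exact: measurable_dist.
  move=> w; rewrite /h indicE; case: (boolP (w \in AL)) => [/set_mem [t [It /= tL] <-]|_].
    move: tL; rewrite in_itv /= => /andP[t0 tL].
    by rewrite mulr1 gI // subr0 (gtr0_norm t0) ger0_norm; lra.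
  by rewrite mulr0 normr0.
have ki : P.-integrable setT (EFin \o k) by do 3!apply: integrable_scale_indicD => //.
have k_le_F w : (g @` I) (Y w) -> k w <= F w.
  move=> [t It Ywt]; rewrite /k /h /F /A0 /Am /Ap /AL !(indic_preimage Y) -Ywt.
  rewrite -(geod_inv_in_set1 g I0) (gI It I0) subr0 !(indic_geod_inv_in dm gI) //.
  rewrite (metric_sym dm (g t) q); apply: geodesic_lower_bound_pointwise => //.
  - exact: tp_min.
  - exact: tp_far.
  - by move=> ->.
have := le_integral_almost_surely measurable_geodesic_support Ysupp ki Fi k_le_F.
rewrite /k !integral_scale_indicD //; try by do ?apply: integrable_scale_indicD.
move: (\int[P]_w (h w)%:E)%E (integrable_fin_num measurableT hi) => [x| |] // _.
rewrite -!EFinD (_ : _ + (_ + _) =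
  d q (g 0) * fine (P A0) + tp * (fine (P Am) - fine (P Ap)) + x) //; ring.
Qed.

End geodesic_support.

Theorem mainTheorem14 (R : realType) (Q : Type) (d : Q -> Q -> R)
  (dO : measure_display) (Omega : measurableType dO) (P : probability Omega R)
  (Y : Omega -> Q) (o m : Q) (I : set R) (g : R -> Q) (q : Q) :
  hadamard d ->
  borel_measurable_map d Y ->
  (forall z : Q,
     (\int[P]_w ((d (Y w) m - d (Y w) o)%:E) <=
      \int[P]_w ((d (Y w) z - d (Y w) o)%:E))%E) ->
  is_interval I -> closed I -> I 0 ->
  unit_speed_geodesic d I g -> g 0 = m ->
  P (Y @^-1` (g @` I)) = 1%E ->
  (exists! p : Q, is_projection d I g q p) /\
  (forall (p : Q) (tp : R), is_projection d I g q p -> I tp -> g tp = p ->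
   0 <= tp ->
   let L := d q p + d p m in
   let am := fine (P (Y @^-1` geod_inv_in I g [set t | t < 0])) in
   let a0 := fine (P (Y @^-1` [set m])) in
   let ap := fine (P (Y @^-1` geod_inv_in I g [set t | 0 < t])) in
   (\int[P]_w ((d (Y w) q - d (Y w) m)%:E) >=
    (d q m * a0 + d p m * (am - ap))%:E +
    \int[P]_w (((L - d (Y w) m) *
                 \1_(Y @^-1` geod_inv_in I g `]0, L]) w)%:E))%E).
Proof.
move=> dH Ymeas _ intI cI I0 gI g0 Ysupp.
have dm : is_metric d by case: dH.
split; first exact: geodesic_projection_exists_unique.
move=> p tp [_ pmin] Itp gtp tp0 /=; subst m p.
have tp_min t : I t -> d q (g tp) <= d q (g t) by move=> It; apply: pmin; exists t.
have tp_far t : I t -> `|t - tp| <= d q (g t).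
  by move=> It; exact: (geodesic_projection_dist_ge dH intI gI Itp It tp_min).
rewrite (gI _ _ Itp I0) subr0 (ger0_norm tp0).
exact: (expectation_geodesic_lower_bound dm Ymeas cI I0 gI Itp tp0 tp_min tp_far Ysupp).
Qed.
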